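(* Let $V$ be a finite-dimensional complex vector space with a Hermitian inner product, $\mathbf G$ a finite group of unitary transformations of $V$, $\mathbf x_0\in V$ a unit vector with full orbit under $\mathbf G$, and consider the subgroup sequence $\{I\}<\mathbf G_1<\mathbf G$ with coset leader sets $\operatorname{CL}(\mathbf G_1/\{I\})=\mathbf G_1$ and $\operatorname{CL}(\mathbf G/\mathbf G_1)$. Then the subgroup decoding algorithm decodes correctly (with some noise) if and only if every element of $\operatorname{CL}(\mathbf G/\mathbf G_1)$ is minimal.
   Context: Full orbit: $|\mathbf G\mathbf x_0|=|\mathbf G|$. $\operatorname{CL}(\mathbf G/\mathbf G_1)$ is a set of representatives of the left cosets of $\mathbf G_1$ in $\mathbf G$ containing $I$. Subgroup decoding algorithm: given $\mathbf r$, choose $d_1\in\mathbf G_1$ minimizing $\|a\mathbf r-\mathbf x_0\|$ over $a\in\mathbf G_1$, then $d_2\in\operatorname{CL}(\mathbf G/\mathbf G_1)$ minimizing $\|a d_1\mathbf r-\mathbf x_0\|$ (ties broken by a fixed ordering); output $d_2d_1$. It decodes correctly with some noise if there is $\delta>0$ such that for all $g\in\mathbf G$ and $\mathbf r$ with $\|\mathbf r-g^{-1}\mathbf x_0\|<\delta$ the output is $g$. For a subgroup $H$, $\operatorname{FR}(H)=\{\mathbf x:\|\mathbf x-\mathbf x_0\|<\|h\mathbf x-\mathbf x_0\|\ \forall h\in H\setminus\operatorname{Stab}_H(\mathbf x_0)\}$. A coset representative $c$ of $\mathbf G_1$ in $\mathbf G$ is minimal if $\mathbf x_0\in c(\operatorname{FR}(\mathbf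 G_1))$. *)

From HB Require Import structures.
From mathcomp Require Import all_boot all_order all_algebra all_fingroup.
From mathcomp Require Import reals.
From mathcomp Require Import complex.
Set Implicit Arguments. Unset Strict Implicit. Unset Printing Implicit Defensive.
Import Order.TTheory GRing.Theory Num.Theory.
Local Open Scope ring_scope.

(* V = C^n (column vectors) with the standard Hermitian inner product. *)

Definition vnorm (R : realType) (n : nat) (v : 'cV[R[i]]_n) : R :=
  Num.sqrt (\sum_(i < n) (Normc.normc (v i ord0)) ^+ 2).

Definition adjmx (R : realType) (n : nat) (A : 'M[R[i]]_n) : 'M[R[i]]_n :=
  map_mx (@conjc R) A^T.

Definition unitary (R : realType) (n : nat) (A : 'M[R[i]]_n) : Prop :=
  adjmx A *m A = 1%:M.

(* G is a finite group of unitary transformations of V: an abstract finite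
   group G acting faithfully by unitary matrices through rho. *)
Definition unitary_group (R : realType) (n : nat) (gT : finGroupType)
    (G : {group gT}) (rho : gT -> 'M[R[i]]_n) : Prop :=
  [/\ {in G &, forall g h, rho (g * h)%g = rho g *m rho h},
      {in G &, injective rho} &
      {in G, forall g, unitary (rho g)}].

Definition act (R : realType) (n : nat) (gT : finGroupType)
    (rho : gT -> 'M[R[i]]_n) (g : gT) (x : 'cV[R[i]]_n) : 'cV[R[i]]_n :=
  rho g *m x.

(* full orbit: |G x0| = |G| *)
Definition full_orbit (R : realType) (n : nat) (gT : finGroupType)
    (G : {group gT}) (rho : gT -> 'M[R[i]]_n) (x0 : 'cV[R[i]]_n) : Prop :=
  {in G &, injective (fun g => act rho g x0)}.

Definition coset_leaders (gT : finGroupType) (G G1 : {group gT})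
    (CL : {set gT}) : Prop :=
  [/\ CL \subset G, (1%g \in CL) &
      forall C, C \in lcosets G1 G -> #|CL :&: C| = 1%N].

Definition is_argmin (R : realType) (gT : finGroupType) (S : {set gT})
    (f : gT -> R) (rk : gT -> nat) (a : gT) : Prop :=
  a \in S /\
  forall b, b \in S -> f a < f b \/ (f a = f b /\ (rk a <= rk b)%N).

Definition subgroup_decode (R : realType) (n : nat) (gT : finGroupType)
    (G1 : {group gT}) (CL : {set gT}) (rho : gT -> 'M[R[i]]_n)
    (x0 : 'cV[R[i]]_n) (rk : gT -> nat) (r : 'cV[R[i]]_n) (d : gT) : Prop :=
  exists d1 d2,
    [/\ is_argmin (G1 : {set gT}) (fun a => vnorm (act rho a r - x0)) rk d1,
        is_argmin CL (fun a => vnorm (act rho a (act rho d1 r) - x0)) rk d2 &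
        d = (d2 * d1)%g].

Definition decodes_correctly (R : realType) (n : nat) (gT : finGroupType)
    (G G1 : {group gT}) (CL : {set gT}) (rho : gT -> 'M[R[i]]_n)
    (x0 : 'cV[R[i]]_n) (rk : gT -> nat) : Prop :=
  exists2 delta : R, 0 < delta &
    forall g r, g \in G -> vnorm (r - act rho g^-1 x0) < delta ->
      forall d, subgroup_decode G1 CL rho x0 rk r d -> d = g.

Definition stab (R : realType) (n : nat) (gT : finGroupType)
    (H : {set gT}) (rho : gT -> 'M[R[i]]_n) (x0 : 'cV[R[i]]_n) : {set gT} :=
  [set h in H | act rho h x0 == x0].

Definition in_FR (R : realType) (n : nat) (gT : finGroupType)
    (H : {set gT}) (rho : gT -> 'M[R[i]]_n) (x0 x : 'cV[R[i]]_n) : Prop :=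
  forall h, h \in H -> h \notin stab H rho x0 ->
    vnorm (x - x0) < vnorm (act rho h x - x0).

Definition minimal_rep (R : realType) (n : nat) (gT : finGroupType)
    (G1 : {group gT}) (rho : gT -> 'M[R[i]]_n) (x0 : 'cV[R[i]]_n) (c : gT) :
    Prop :=
  exists y, in_FR (G1 : {set gT}) rho x0 y /\ act rho c y = x0.

From Pilot Require Import Defs.
From HB Require Import structures.
From mathcomp Require Import all_boot all_order all_algebra all_fingroup.
From mathcomp Require Import reals.
From mathcomp Require Import complex.
From mathcomp Require Import ring lra.
Import Order.TTheory GRing.Theory Num.Theory.
Set Implicit Arguments.
Unset Strict Implicit.
Unset Printing Implicit Defensive.
Local Open Scope ring_scope.
Local Open Scope complex_scope.

(* action.v also exports a constant [act]. *)
Local Notation act := Defs.act.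

(* If every coset leader c is minimal, then y_c = c^-1 x0 lies in the open set
   FR(G1), so on the noiseless input g^-1 x0 = h^-1 y_c (g = c h, h in G1) both
   stages of the decoder win by strict margins: h beats every other element of
   G1, and c is the only leader sending y_c to x0 (full orbit).  The decoding
   costs are 1-Lipschitz in the input, so half the smallest of these finitely
   many margins is an admissible noise level.
   Conversely, if y_c is not in FR(G1), some b <> 1 in G1 brings y_c at least as
   close to x0; strict convexity of the Hermitian norm yields inputs arbitrarily
   close to y_c on which b strictly beats 1 in the first stage, so d1 <> 1 and
   the output differs from c. *)

Section HermitianNorm.
Variables (R : realType) (n : nat).
Implicit Types (u v w : 'cV[R[i]]_n) (A : 'M[R[i]]_n).

Definition hdot u v : R[i] := \sum_(k < n) conjc (u k ord0) * v k ord0.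

Lemma normc_sqrC (z : R[i]) : ((Normc.normc z) ^+ 2)%:C = conjc z * z.
Proof.
case: z => a b /=; rewrite sqr_sqrtr ?addr_ge0 ?sqr_ge0 //.
by apply/eqP; rewrite eq_complex /=; apply/andP; split; apply/eqP; ring.
Qed.

Lemma vnorm_ge0 v : 0 <= vnorm v.
Proof. exact: sqrtr_ge0. Qed.

Lemma vnorm_sqr v : vnorm v ^+ 2 = \sum_(k < n) Normc.normc (v k ord0) ^+ 2.
Proof. by rewrite sqr_sqrtr // sumr_ge0 // => k _; rewrite sqr_ge0. Qed.

Lemma vnorm_sqrC v : (vnorm v ^+ 2)%:C = hdot v v.
Proof.
by rewrite vnorm_sqr rmorph_sum; apply: eq_bigr => k _; apply: normc_sqrC.
Qed.

Lemma hdot_unitary A u v : unitary A -> hdot (A *m u) (A *m v) = hdot u v.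
Proof.
have hdotE w w' : hdot w w' = ((map_mx conjc w)^T *m w') ord0 ord0.
  by rewrite mxE; apply: eq_bigr => k _; rewrite !mxE.
move=> unitA; rewrite !hdotE map_mxM trmx_mul -mulmxA [X in _ *m X]mulmxA.
have -> : (map_mx conjc A)^T = adjmx A by rewrite /adjmx map_trmx.
by rewrite unitA mul1mx.
Qed.

Lemma vnorm_unitary A v : unitary A -> vnorm (A *m v) = vnorm v.
Proof.
move=> unitA; apply/eqP; rewrite -(eqrXn2 (ltn0Sn 1)) ?vnorm_ge0 //.
by apply/eqP/complexI; rewrite !vnorm_sqrC hdot_unitary.
Qed.

Lemma vnorm_gt0 v : v != 0 -> 0 < vnorm v.
Proof.
apply: contraNT; rewrite -leNgt => vnorm_le0; apply/eqP/matrixP => k j.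
have : \sum_l Normc.normc (v l ord0) ^+ 2 == 0.
  by rewrite -vnorm_sqr sqrf_eq0 eq_le vnorm_le0 vnorm_ge0.
rewrite psumr_eq0 => [/allP/(_ k (mem_index_enum k))|l _]; last first.
  by rewrite sqr_ge0.
rewrite implyTb sqrf_eq0 (ord1 j) mxE => /eqP; exact: Normc.eq0_normc.
Qed.

Lemma vnormN v : vnorm (- v) = vnorm v.
Proof.
by rewrite /vnorm; congr Num.sqrt; apply: eq_bigr => k _; rewrite mxE normcN.
Qed.

Lemma vdistC u v : vnorm (u - v) = vnorm (v - u).
Proof. by rewrite -vnormN opprB. Qed.

Lemma vnormZ (t : R) v : vnorm (t%:C *: v) = `|t| * vnorm v.
Proof.
rewrite /vnorm -sqrtr_sqr -sqrtrM ?sqr_ge0 // mulr_sumr; congr Num.sqrt.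
apply: eq_bigr => k _; rewrite !mxE Normc.normcM exprMn; congr (_ * _).
by rewrite /= expr0n /= addr0 sqrtr_sqr real_normK ?num_real.
Qed.

Lemma vnorm0 : vnorm (0 : 'cV[R[i]]_n) = 0.
Proof. by have := vnormZ 0 (0 : 'cV[R[i]]_n); rewrite scaler0 normr0 mul0r. Qed.

Lemma cauchy_schwarz_sum (a b : 'I_n -> R) :
  \sum_k a k * b k <= Num.sqrt (\sum_k a k ^+ 2) * Num.sqrt (\sum_k b k ^+ 2).
Proof.
have sumsq_ge0 (c : 'I_n -> R) : 0 <= \sum_k c k ^+ 2.
  by apply: sumr_ge0 => k _; rewrite sqr_ge0.
have sumsq_eq0 (c : 'I_n -> R) :
    Num.sqrt (\sum_k c k ^+ 2) = 0 -> forall k, c k = 0.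
  move=> /eqP; rewrite sqrtr_eq0 => le0 k.
  have : \sum_l c l ^+ 2 == 0 by rewrite eq_le le0 sumsq_ge0.
  rewrite psumr_eq0 => [/allP/(_ k (mem_index_enum k))|l _]; last first.
    by rewrite sqr_ge0.
  by rewrite implyTb sqrf_eq0 => /eqP.
set x := Num.sqrt (\sum_k a k ^+ 2); set y := Num.sqrt (\sum_k b k ^+ 2).
have [x0|x_neq0] := eqVneq x 0.
  by rewrite x0 mul0r big1 // => k _; rewrite (sumsq_eq0 a x0) mul0r.
have [y0|y_neq0] := eqVneq y 0.
  by rewrite y0 mulr0 big1 // => k _; rewrite (sumsq_eq0 b y0) mulr0.
have xy_gt0 : 0 < x * y by rewrite mulr_gt0 // lt_def ?x_neq0 ?y_neq0 sqrtr_ge0.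
have : 0 <= \sum_k (y * a k - x * b k) ^+ 2 by exact: sumsq_ge0.
have -> : \sum_k (y * a k - x * b k) ^+ 2 = y ^+ 2 * (\sum_k a k ^+ 2)
    - 2 * x * y * (\sum_k a k * b k) + x ^+ 2 * (\sum_k b k ^+ 2).
  by rewrite !mulr_sumr -sumrB -big_split /=; apply: eq_bigr => k _; ring.
rewrite -[\sum_k a k ^+ 2](sqr_sqrtr (sumsq_ge0 a)) -/x.
rewrite -[\sum_k b k ^+ 2](sqr_sqrtr (sumsq_ge0 b)) -/y.
nra.
Qed.

Lemma vnormD u v : vnorm (u + v) <= vnorm u + vnorm v.
Proof.
pose a k := Normc.normc (u k ord0); pose b k := Normc.normc (v k ord0).
have normc_ge0 (z : R[i]) : 0 <= Normc.normc z.
  by case: z => ? ? /=; apply: sqrtr_ge0.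
have cs : \sum_k a k * b k <= vnorm u * vnorm v := cauchy_schwarz_sum a b.
rewrite -(ler_pXn2r (ltn0Sn 1)) ?nnegrE ?addr_ge0 ?vnorm_ge0 // sqrrD !vnorm_sqr.
apply: (le_trans (y := \sum_k (a k + b k) ^+ 2)).
  apply: ler_sum => k _; rewrite ler_pXn2r ?nnegrE ?addr_ge0 ?normc_ge0 // mxE.
  exact: le_normcD.
have -> : \sum_k (a k + b k) ^+ 2 =
    \sum_k a k ^+ 2 + \sum_k b k ^+ 2 + 2 * \sum_k a k * b k.
  by rewrite mulr_sumr -!big_split; apply: eq_bigr => k _ /=; ring.
rewrite mulr2n; lra.
Qed.

Lemma ler_vdist_dist u v : `|vnorm u - vnorm v| <= vnorm (u - v).
Proof.
rewrite ler_norml; have := vnormD (u - v) v; have := vnormD (v - u) u.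
by rewrite !subrK (vdistC v u); lra.
Qed.

Lemma vnorm_sqr_shift u v (t : R) :
  vnorm (u + t%:C *: (u - v)) ^+ 2 - vnorm (v + t%:C *: (u - v)) ^+ 2 =
  vnorm u ^+ 2 - vnorm v ^+ 2 + 2 * t * vnorm (u - v) ^+ 2.
Proof.
have realCD (x y : R) : (x + y)%:C = x%:C + y%:C by exact: rmorphD.
have realCB (x y : R) : (x - y)%:C = x%:C - y%:C by exact: rmorphB.
have realCM (x y : R) : (x * y)%:C = x%:C * y%:C by exact: rmorphM.
have realC2 : (2 : R)%:C = 2 by exact: (rmorph_nat _ 2).
apply: complexI; rewrite [RHS]realCD !realCB (realCM (2 * t)) realCM realC2.
rewrite !vnorm_sqrC /hdot.
rewrite mulr_sumr -!sumrB -big_split /=; apply: eq_bigr => k _.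
have conjcD (z w : R[i]) : conjc (z + w) = conjc z + conjc w by exact: rmorphD.
have conjcB (z w : R[i]) : conjc (z - w) = conjc z - conjc w by exact: rmorphB.
have conjcM (z w : R[i]) : conjc (z * w) = conjc z * conjc w by exact: rmorphM.
by rewrite !mxE !conjcD !conjcM !conjcB conjc_real; ring.
Qed.

(* The witness is y + t (v - u) for a small t > 0; the gain over u is the
   term 2 t |v - u|^2 of [vnorm_sqr_shift], i.e. strict convexity of the norm. *)
Lemma exists_strictly_closer u v y (delta : R) :
  u != v -> vnorm (y - v) <= vnorm (y - u) -> 0 < delta ->
  exists r, vnorm (r - y) < delta /\ vnorm (r - v) < vnorm (r - u).
Proof.
move=> neq_uv closer delta_gt0; set p := y - u; set q := y - v.
have d_gt0 : 0 < vnorm (p - q).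
  by apply: vnorm_gt0; rewrite /p /q opprB addrC addrA subrK subr_eq0 eq_sym.
set t := delta / (2 * vnorm (p - q)).
have t_gt0 : 0 < t by rewrite divr_gt0 // mulr_gt0.
exists (y + t%:C *: (p - q)); split.
  rewrite addrAC subrr add0r vnormZ gtr0_norm //.
  have -> : t * vnorm (p - q) = delta / 2 by rewrite /t; field; rewrite gt_eqF.
  lra.
rewrite (addrAC y _ (- v)) (addrAC y _ (- u)) -/p -/q.
rewrite -(ltr_pXn2r (ltn0Sn 1)) ?nnegrE ?vnorm_ge0 // -subr_gt0 vnorm_sqr_shift.
have : vnorm q ^+ 2 <= vnorm p ^+ 2 by rewrite ler_pXn2r ?nnegrE ?vnorm_ge0.
have : 0 < 2 * t * vnorm (p - q) ^+ 2.
  by apply: mulr_gt0; [apply: mulr_gt0 | apply: exprn_gt0].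
lra.
Qed.

End HermitianNorm.

Section LexicographicArgmin.
Variables (R : realType) (gT : finGroupType).
Implicit Types (S : {set gT}) (f : gT -> R) (rk : gT -> nat).

Lemma is_argmin_exists S f rk a0 : a0 \in S -> exists a, is_argmin S f rk a.
Proof.
move=> a0S; pose key a := (f a, rk a) : R *l nat.
case: (arg_minP key a0S) => a aS amin; exists a; split=> // b /amin.
by rewrite lexi_pair; case: ltgtP => //= [_ _|->]; [left|right].
Qed.

Lemma is_argmin_le S f rk a b : is_argmin S f rk a -> b \in S -> f a <= f b.
Proof. by case=> _ amin /amin [/ltW|[->]]. Qed.

Lemma is_argmin_stable S f f0 rk a0 (e : R) a :
    a0 \in S -> (forall b, b \in S -> b != a0 -> f0 a0 + e <= f0 b) ->
    (forall b, b \in S -> `|f b - f0 b| < e / 2) ->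
  is_argmin S f rk a -> a = a0.
Proof.
move=> a0S gap near amin; have [//|a_neq] := eqVneq a a0; exfalso.
have [aS _] := amin.
have := gap a aS a_neq; have := is_argmin_le amin a0S.
by move: (near a aS) (near a0 a0S); rewrite !ltr_norml; lra.
Qed.

End LexicographicArgmin.

Lemma exists_pos_lbound (R : realDomainType) (T : finType) (P : pred T) (F : T -> R) :
  (forall x, P x -> 0 < F x) -> exists2 e, 0 < e & forall x, P x -> e <= F x.
Proof.
exists (\big[Num.min/1]_(x | P x) F x); first exact: lt_bigmin.
by move=> x Px; apply: bigmin_le_cond.
Qed.

Section UnitaryAction.
Variables (R : realType) (n : nat) (gT : finGroupType) (G : {group gT}).
Variable rho : gT -> 'M[R[i]]_n.
Hypothesis rhoU : unitary_group G rho.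
Implicit Types (u v z : 'cV[R[i]]_n).

Lemma act1 v : act rho 1%g v = v.
Proof.
case: rhoU => rhoM _ unitU.
have rho1 : rho 1%g = rho 1%g *m rho 1%g by rewrite -rhoM ?mulg1.
have unit1 : adjmx (rho 1%g) *m rho 1%g = 1%:M := unitU 1%g (group1 G).
suff rho1_id : rho 1%g = 1%:M by rewrite /act rho1_id mul1mx.
by rewrite -[LHS]mul1mx -[in LHS]unit1 -mulmxA -rho1.
Qed.

Lemma actM g h v :
  g \in G -> h \in G -> act rho g (act rho h v) = act rho (g * h) v.
Proof. by case: rhoU => rhoM _ _ gG hG; rewrite /act mulmxA rhoM. Qed.

Lemma actKV g v : g \in G -> act rho g^-1 (act rho g v) = v.
Proof. by move=> gG; rewrite actM ?groupV // mulVg act1. Qed.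

Lemma actVK g v : g \in G -> act rho g (act rho g^-1 v) = v.
Proof. by move=> gG; rewrite actM ?groupV // mulgV act1. Qed.

Lemma actB g u v : act rho g (u - v) = act rho g u - act rho g v.
Proof. exact: mulmxBr. Qed.

Lemma act_vnorm g v : g \in G -> vnorm (act rho g v) = vnorm v.
Proof. by case: rhoU => _ _ unitU gG; apply: vnorm_unitary; apply: unitU. Qed.

Lemma act_lipschitz g u v z : g \in G ->
  `|vnorm (act rho g u - z) - vnorm (act rho g v - z)| <= vnorm (u - v).
Proof.
move=> gG; apply: le_trans (ler_vdist_dist _ _) _.
by rewrite opprB addrA subrK -actB act_vnorm.
Qed.

Lemma act_fixed_eq1 x0 g :
  full_orbit G rho x0 -> g \in G -> act rho g x0 = x0 -> g = 1%g.
Proof. by move=> full gG fix_g; apply: full; rewrite ?group1 //= fix_g act1. Qed.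

End UnitaryAction.

Section CosetLeaders.
Variables (gT : finGroupType) (G G1 : {group gT}) (CL : {set gT}).
Hypothesis leaders : coset_leaders G G1 CL.

Lemma coset_leader_exists g : g \in G -> exists2 c, c \in CL & (c^-1 * g)%g \in G1.
Proof.
case: leaders => _ _ meet1 gG.
have /cards1P [c CLgG1] : #|CL :&: (g *: G1)%g| == 1%N.
  by rewrite meet1 //; apply/lcosetsP; exists g.
have /setIP [cCL] : c \in CL :&: (g *: G1)%g by rewrite CLgG1 set11.
by rewrite mem_lcoset -groupV invMg invgK; exists c.
Qed.

Lemma coset_leader_unique c c' :
  c \in CL -> c' \in CL -> (c^-1 * c')%g \in G1 -> c = c'.
Proof.
case: leaders => /subsetP CLG _ meet1 cCL c'CL cc'G1.
have /cards1P [x CLcG1] : #|CL :&: (c *: G1)%g| == 1%N.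
  by rewrite meet1 //; apply/lcosetsP; exists c; rewrite ?CLG.
have : c \in CL :&: (c *: G1)%g by rewrite inE cCL mem_lcoset mulVg group1.
have : c' \in CL :&: (c *: G1)%g by rewrite inE c'CL mem_lcoset.
by rewrite CLcG1 !inE => /eqP -> /eqP ->.
Qed.

End CosetLeaders.

Section SubgroupDecoding.
Variables (R : realType) (n : nat) (gT : finGroupType) (G G1 : {group gT}).
Variables (rho : gT -> 'M[R[i]]_n) (x0 : 'cV[R[i]]_n) (CL : {set gT}).
Variable rk : gT -> nat.
Hypotheses (rhoU : unitary_group G rho) (full : full_orbit G rho x0).
Hypotheses (sG1 : G1 \subset G) (leaders : coset_leaders G G1 CL).

Lemma notin_stab b : b \in G1 -> (b \notin stab G1 rho x0) = (b != 1%g).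
Proof.
move=> bG1; rewrite inE bG1 /=; congr negb; apply/eqP/eqP => [|->].
  exact/(act_fixed_eq1 rhoU full)/(subsetP sG1).
exact: act1 rhoU _.
Qed.

Lemma minimal_repE c :
  c \in G -> minimal_rep G1 rho x0 c <-> in_FR G1 rho x0 (act rho c^-1 x0).
Proof.
move=> cG; split=> [[y [yFR y_x0]]|FR].
  by have -> : act rho c^-1 x0 = y by rewrite -y_x0 (actKV rhoU).
by exists (act rho c^-1 x0); rewrite (actVK rhoU).
Qed.

Lemma decodes_correctly_in_FR c :
  decodes_correctly G G1 CL rho x0 rk -> c \in CL ->
  in_FR G1 rho x0 (act rho c^-1 x0).
Proof.
case=> delta delta_gt0 decode cCL b bG1; have [/subsetP CLG CL1 _] := leaders.
have [cG bG] := (CLG c cCL, subsetP sG1 b bG1).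
rewrite notin_stab // => b_neq1; set y := act rho c^-1 x0.
rewrite ltNge; apply/negP => b_closer.
have x0_neq : x0 != act rho b^-1 x0.
  apply: contra_neq b_neq1 => /esym /(act_fixed_eq1 rhoU full (groupVr bG)).
  by move/eqP; rewrite invg_eq1 => /eqP.
have y_closer : vnorm (y - act rho b^-1 x0) <= vnorm (y - x0).
  by rewrite -(act_vnorm rhoU _ bG) actB (actVK rhoU).
have [r [r_near r_closer]] := exists_strictly_closer x0_neq y_closer delta_gt0.
have [d1 d1_min] :=
  is_argmin_exists (fun a => vnorm (act rho a r - x0)) rk (group1 G1).
have [d2 d2_min] :=
  is_argmin_exists (fun a => vnorm (act rho a (act rho d1 r) - x0)) rk CL1.
have d21 : (d2 * d1)%g = c by apply: (decode c r cG r_near); exists d1, d2.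
have d1_eq1 : d1 = 1%g.
  have [[d1G1 _] [d2CL _]] := (d1_min, d2_min).
  have c_d2 : c = d2.
    by apply: (coset_leader_unique leaders); rewrite // -d21 invMg mulgKV groupV.
  by apply: (mulgI d2); rewrite mulg1 d21 c_d2.
have := is_argmin_le d1_min bG1; rewrite d1_eq1 (act1 rhoU).
have -> : act rho b r - x0 = act rho b (r - act rho b^-1 x0).
  by rewrite actB (actVK rhoU).
by rewrite (act_vnorm rhoU _ bG) leNgt r_closer.
Qed.

Lemma coset_leader_gap : exists2 e : R, 0 < e &
  forall a c, a \in CL -> c \in CL -> a != c ->
    e <= vnorm (act rho a (act rho c^-1 x0) - x0).
Proof.
have [/subsetP CLG _ _] := leaders.
pose P (ac : gT * gT) := [&& ac.1 \in CL, ac.2 \in CL & ac.1 != ac.2].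
pose gap (ac : gT * gT) := vnorm (act rho ac.1 (act rho ac.2^-1 x0) - x0).
have /(@exists_pos_lbound R _ P gap) [e e_gt0 e_le] : forall ac, P ac -> 0 < gap ac.
  move=> [a c] /and3P [/= aCL cCL a_neq_c]; have [aG cG] := (CLG a aCL, CLG c cCL).
  apply: vnorm_gt0; rewrite subr_eq0 (actM rhoU) ?groupV //.
  apply: contra a_neq_c => /eqP fix_ac.
  by rewrite eq_mulgV1 (act_fixed_eq1 rhoU full (groupM aG (groupVr cG)) fix_ac).
by exists e => // a c aCL cCL a_neq_c; apply: (e_le (a, c)); apply/and3P.
Qed.

Lemma in_FR_gap :
  (forall c, c \in CL -> in_FR G1 rho x0 (act rho c^-1 x0)) ->
  exists2 e : R, 0 < e & forall c b, c \in CL -> b \in G1 -> b != 1%g ->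
    vnorm (act rho c^-1 x0 - x0) + e <= vnorm (act rho b (act rho c^-1 x0) - x0).
Proof.
move=> FR; pose P (cb : gT * gT) := (cb.1 \in CL) && (cb.2 \in G1 :\ 1%g).
pose gap (cb : gT * gT) :=
  vnorm (act rho cb.2 (act rho cb.1^-1 x0) - x0) - vnorm (act rho cb.1^-1 x0 - x0).
have /(@exists_pos_lbound R _ P gap) [e e_gt0 e_le] : forall cb, P cb -> 0 < gap cb.
  move=> [c b] /andP [/= cCL /setD1P [b_neq1 bG1]]; rewrite subr_gt0.
  by apply: FR; rewrite ?notin_stab.
exists e => // c b cCL bG1 b_neq1; rewrite addrC -lerBrDr.
by apply: (e_le (c, b)); rewrite /P /= cCL !inE b_neq1.
Qed.

Lemma in_FR_decodes_correctly :
  (forall c, c \in CL -> in_FR G1 rho x0 (act rho c^-1 x0)) ->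
  decodes_correctly G G1 CL rho x0 rk.
Proof.
move=> FR; have [/subsetP CLG _ _] := leaders.
have [e1 e1_gt0 e1_le] := in_FR_gap FR; have [e2 e2_gt0 e2_le] := coset_leader_gap.
exists (Num.min e1 e2 / 2); first by rewrite divr_gt0 // lt_min e1_gt0 e2_gt0.
move=> g r gG r_near d [d1 [d2 [d1_min d2_min ->]]].
have [c cCL hG1] := coset_leader_exists leaders gG; set h := (c^-1 * g)%g in hG1.
have [cG hG] := (CLG c cCL, subsetP sG1 h hG1).
have gE : g = (c * h)%g by rewrite mulKVg.
set r0 := act rho g^-1 x0; set y := act rho c^-1 x0.
have r0E : r0 = act rho h^-1 y by rewrite (actM rhoU) ?groupV // -invMg -gE.
have [near1 near2] : vnorm (r - r0) < e1 / 2 /\ vnorm (r - r0) < e2 / 2.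
  have min_le1 : Num.min e1 e2 <= e1 by rewrite ge_min lexx.
  have min_le2 : Num.min e1 e2 <= e2 by rewrite ge_min lexx orbT.
  lra.
have d1_eq : d1 = h.
  apply: (is_argmin_stable (f0 := fun a => vnorm (act rho a r0 - x0)) (e := e1)
    hG1 _ _ d1_min).
    move=> a aG1 a_neq_h; have aG := subsetP sG1 a aG1.
    rewrite r0E (actVK rhoU) // (actM rhoU) ?groupV //.
    by apply: e1_le; rewrite ?groupM ?groupV // -eq_mulgV1.
  move=> a aG1; apply: le_lt_trans near1.
  exact: (act_lipschitz rhoU _ _ _ (subsetP sG1 a aG1)).
have d2_eq : d2 = c.
  rewrite d1_eq in d2_min.
  apply: (is_argmin_stable (f0 := fun a => vnorm (act rho a (act rho h r0) - x0))
    (e := e2) cCL _ _ d2_min).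
    move=> a aCL a_neq_c; rewrite r0E !(actVK rhoU) // subrr vnorm0 add0r.
    exact: e2_le.
  move=> a aCL; apply: le_lt_trans (act_lipschitz rhoU _ _ _ (CLG a aCL)) _.
  by rewrite -actB (act_vnorm rhoU).
by rewrite d2_eq d1_eq gE.
Qed.

End SubgroupDecoding.

Theorem mainTheorem11 (R : realType) (n : nat) (gT : finGroupType)
    (G G1 : {group gT}) (rho : gT -> 'M[R[i]]_n) (x0 : 'cV[R[i]]_n)
    (CL : {set gT}) (rk : gT -> nat) :
  unitary_group G rho ->
  vnorm x0 = 1 ->
  full_orbit G rho x0 ->
  (1%G : {group gT}) \proper G1 -> G1 \proper G ->
  coset_leaders G G1 CL ->
  injective rk ->
  decodes_correctly G G1 CL rho x0 rk <->
  (forall c, c \in CL -> minimal_rep G1 rho x0 c).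
Proof.
move=> rhoU _ full _ /proper_sub sG1 leaders _.
have [/subsetP CLG _ _] := leaders.
split=> [decode c cCL | minimal].
  apply/(minimal_repE _ _ rhoU (CLG c cCL)).
  exact: (decodes_correctly_in_FR rhoU full sG1 leaders decode cCL).
apply: (in_FR_decodes_correctly rk rhoU full sG1 leaders) => c cCL.
exact/(minimal_repE _ _ rhoU (CLG c cCL))/minimal.
Qed.
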